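(* The singular locus $\operatorname{Sing}(\widetilde{\mathfrak I})$ of the left ideal $\widetilde{\mathfrak I}$ of $\widetilde D_m$ generated by $\widetilde\ell_1,\dots,\widetilde\ell_m$ is contained in $S(z)=\{z\in\mathbb C^m\mid z_1\cdots z_m R(z)=0\}$.
   Context: $\widetilde D_m=\mathbb C\langle z_1,\dots,z_m,\widetilde\partial_1,\dots,\widetilde\partial_m\rangle$ is the Weyl algebra ($\widetilde\partial_k=\partial/\partial z_k$). For parameters $a_1,\dots,a_p\in\mathbb C$, $b_{j,k}\in\mathbb C$ ($1\le j\le p-1$), $b_{p,k}=1$: $\widetilde\ell_k=\prod_{i=1}^p(\tfrac1p z_k\widetilde\partial_k+b_{i,k}-1)-z_k^p\prod_{i=1}^p(\tfrac1p\sum_{j=1}^m z_j\widetilde\partial_j+a_i)$. $R(z)=\prod_{(i_1,\dots,i_m)\in\{1,\dots,p\}^m}(1-\zeta_p^{i_1}z_1-\cdots-\zeta_p^{i_m}z_m)$, $\zeta_p=e^{2\pi\sqrt{-1}/p}$. Singular locus of a left ideal $\mathfrak J$: Zariski closure of the projection to $z$-space of $\operatorname{Ch}(\mathfrak J)\setminus\{\xi=0\}$, where $\operatorname{Ch}(\mathfrak J)$ is the common zero set in $\mathbb C^{2m}$ of the principal symbols (w.r.t. order filtration) of all elements of $\mathfrak J$. *)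

From HB Require Import structures.
From Stdlib Require Import Reals.
From mathcomp Require Import all_boot all_order all_algebra.
From mathcomp Require Import Rstruct.
From mathcomp Require Import complex.
From mathcomp Require Import mpoly.
Set Implicit Arguments. Unset Strict Implicit. Unset Printing Implicit Defensive.
Import Order.TTheory GRing.Theory Num.Theory.
Local Open Scope ring_scope.

Notation CC := (Rcomplex R).

Definition zeta (p : nat) : CC :=
  Complex (cos (2 * PI / p%:R)) (sin (2 * PI / p%:R)).

(* An element is stored in
   its (unique) normal-ordered form  sum_beta a_beta(z) d^beta,  i.e. as a
   polynomial in the (commuting) symbols d_1..d_m whose coefficients are
   polynomials in z_1..z_m.  Addition is that of polynomials; the
   (noncommutative) product is [wmul] below. *)
Definition weyl (m : nat) := {mpoly {mpoly CC[m]}[m]}.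

Definition wz m (k : 'I_m) : weyl m := ('X_k : {mpoly CC[m]})%:MP.
Definition wd m (k : 'I_m) : weyl m := 'X_k.
Definition wc m (c : CC) : weyl m := (c%:MP : {mpoly CC[m]})%:MP.

(* left multiplication by d_i :
   d_i (c(z) d^delta) = (d c/d z_i) d^delta + c(z) d^(delta + e_i) *)
Definition dleft m (i : 'I_m) (Q : weyl m) : weyl m :=
  map_mpoly (mderiv i) Q + 'X_i * Q.

Definition dpow m (beta : 'X_{1..m}) (Q : weyl m) : weyl m :=
  foldr (fun i Q' => iter (beta i) (dleft i) Q') Q (enum 'I_m).

Definition zleft m (a : {mpoly CC[m]}) (Q : weyl m) : weyl m := a%:MP * Q.

Definition wmul m (P Q : weyl m) : weyl m :=
  \sum_(beta <- msupp P) zleft (P@_beta) (dpow beta Q).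

Definition wone m : weyl m := 1.

(* The operators  l_k  (b : 'I_p -> 'I_m -> CC with b_{p,k} = 1 imposed in
   the theorem; index i : 'I_p stands for i+1 in the paper). *)
Definition ell (m p : nat) (a : 'I_p -> CC) (b : 'I_p -> 'I_m -> CC)
    (k : 'I_m) : weyl m :=
  \big[@wmul m / wone m]_(i < p)
      (wmul (wc m (p%:R^-1)) (wmul (wz k) (wd k)) + wc m (b i k - 1))
  - wmul (\big[@wmul m / wone m]_(i < p) wz k)
         (\big[@wmul m / wone m]_(i < p)
             (wmul (wc m (p%:R^-1)) (\sum_(j < m) wmul (wz j) (wd j)) + wc m (a i))).

Definition in_left_ideal m (n : nat) (g : 'I_n -> weyl m) (P : weyl m) : Prop :=
  exists Q : 'I_n -> weyl m, P = \sum_(k < n) wmul (Q k) (g k).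

(* principal symbol w.r.t. the order filtration, evaluated at (z, xi):
   sum over the monomials of maximal order in d of a_beta(z) xi^beta
   (the symbol of 0 is 0). *)
Definition psymb m (P : weyl m) (z xi : 'I_m -> CC) : CC :=
  \sum_(beta <- msupp P | mdeg beta == (msize P).-1)
     (P@_beta).@[z] * \prod_(i < m) xi i ^+ beta i.

Definition charvar m (J : weyl m -> Prop) (z xi : 'I_m -> CC) : Prop :=
  forall P, J P -> psymb P z xi = 0.

Definition zariski_closure m (A : ('I_m -> CC) -> Prop) (x : 'I_m -> CC)
  : Prop :=
  forall f : {mpoly CC[m]}, (forall y, A y -> f.@[y] = 0) -> f.@[x] = 0.

Definition sing_locus m (J : weyl m -> Prop) (x : 'I_m -> CC) : Prop :=
  zariski_closure (fun z => exists xi, (exists k, xi k != 0) /\ charvar J z xi) x.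

Definition Rpoly (m p : nat) (z : 'I_m -> CC) : CC :=
  \prod_(t : {ffun 'I_m -> 'I_p})
     (1 - \sum_(j < m) zeta p ^+ (t j).+1 * z j).

From HB Require Import structures.
From Stdlib Require Import Reals Lra Psatz.
From mathcomp Require Import all_boot all_order all_algebra.
From mathcomp Require Import Rstruct complex mpoly.
From mathcomp Require Import zify.
Import Order.TTheory GRing.Theory Num.Theory.
Local Open Scope ring_scope.
Set Implicit Arguments. Unset Strict Implicit.

(* Grading the normal-ordered form sum_beta a_beta(z) d^beta by |beta|, the
   degree-d part of a product of operators of orders d1 and d2 (d = d1 + d2)
   is the commutative product of their top parts: commuting d_i past a(z)
   only creates terms of lower order.  Hence the principal symbol of l_k is
   p^-p ((z_k xi_k)^p - z_k^p s^p) with s = sum_j z_j xi_j.  If (z, xi) lies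
   in the characteristic variety with xi <> 0 and z_1 ... z_m <> 0, all these
   symbols vanish, so xi_k^p = s^p for every k; then s <> 0, each xi_k / s
   is a p-th root of unity zeta^(t_k + 1), and the factor of R(z) indexed
   by t equals 1 - s / s = 0.  So z_1 ... z_m R(z) vanishes on the projection
   of Ch \ {xi = 0}, hence on its Zariski closure. *)

Lemma msize_map_mpoly_le (n : nat) (R S : nzRingType) (f : {additive R -> S})
    (P : {mpoly R[n]}) :
  (msize (map_mpoly f P) <= msize P)%N.
Proof.
rewrite [X in (X <= _)%N]msizeE; apply/bigmax_leqP_seq => beta.
rewrite !mcoeff_msupp mcoeff_map_mpoly => nz_beta _; apply: msize_mdeg_lt.
by rewrite mcoeff_msupp; apply: contra_neq nz_beta => ->; rewrite raddf0.
Qed.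

Section TopPart.
Variables (n : nat) (R : nzRingType).
Implicit Types (P Q T U : {mpoly R[n]}) (d : nat).

Definition top_part d P T := (msize P <= d.+1)%N /\ pihomog mdeg d P = T.

Lemma pihomog_msize_le d P : (msize P <= d)%N -> pihomog mdeg d P = 0.
Proof.
move=> le_Pd; rewrite pihomogE big_seq_cond big_pred0 // => beta.
apply/negbTE/negP => /andP[/msize_mdeg_lt lt_beta /eqP deg_beta].
by move: (leq_trans lt_beta le_Pd); rewrite deg_beta ltnn.
Qed.

Lemma top_part_msize d P T : top_part d P T -> T != 0 -> msize P = d.+1.
Proof.
case=> le_P <- nzT; apply/eqP; rewrite eqn_leq le_P ltnNge.
by apply: contra nzT => /pihomog_msize_le ->.
Qed.

Lemma top_part_const P : (msize P <= 1)%N -> top_part 0 P P.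
Proof. by move=> le_P; split; rewrite // [in RHS](pihomog_partitionE le_P) big_ord1. Qed.

Lemma top_partX i : top_part 1 'X_i ('X_i : {mpoly R[n]}).
Proof.
split; first by rewrite msizeX mdeg1.
by rewrite pihomogX; have -> : (mdeg U_(i) == 1)%N by apply/eqP/mdeg1.
Qed.

Lemma top_partDl d P Q T : top_part d P T -> (msize Q <= d)%N -> top_part d (P + Q) T.
Proof.
case=> le_P topP le_Q; split.
  by rewrite (leq_trans (msizeD_le _ _)) // geq_max le_P (leq_trans le_Q).
by rewrite pihomogD topP pihomog_msize_le ?addr0.
Qed.

Lemma top_partB d P Q T U :
  top_part d P T -> top_part d Q U -> top_part d (P - Q) (T - U).
Proof.
case=> le_P topP [le_Q topQ]; split; last by rewrite pihomogB topP topQ.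
by rewrite (leq_trans (msizeD_le _ _)) // msizeN geq_max le_P.
Qed.

Lemma top_part_sum (I : Type) (r : seq I) (G H : I -> {mpoly R[n]}) d :
  (forall i, top_part d (G i) (H i)) ->
  top_part d (\sum_(i <- r) G i) (\sum_(i <- r) H i).
Proof.
move=> topG; elim: r => [|i r [le_S topS]].
  by rewrite !big_nil; split; rewrite ?msize0 ?raddf0.
have [le_G topGi] := topG i; rewrite !big_cons; split; last first.
  by rewrite pihomogD topGi topS.
by rewrite (leq_trans (msizeD_le _ _)) // geq_max le_G.
Qed.

Lemma top_partM d1 d2 P Q T U : top_part d1 P T -> top_part d2 Q U ->
  top_part (d1 + d2) (P * Q) (T * U).
Proof.
case=> le_P <- [le_Q <-].
have hom e1 e2 : pihomog mdeg e1 P * pihomog mdeg e2 Q \is (e1 + e2).-homog.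
  by apply: dhomogM; apply: pihomogP.
have -> : P * Q = \sum_(e1 < d1.+1) \sum_(e2 < d2.+1)
                     pihomog mdeg e1 P * pihomog mdeg e2 Q.
  rewrite {1}(pihomog_partitionE le_P) {1}(pihomog_partitionE le_Q) big_distrl.
  by apply: eq_bigr => e1 _; rewrite big_distrr.
split.
  rewrite (leq_trans (msize_sum _ _ _)) //; apply/bigmax_leqP => e1 _.
  rewrite (leq_trans (msize_sum _ _ _)) //; apply/bigmax_leqP => e2 _.
  have /dhomogP deg_e := hom e1 e2.
  rewrite msizeE; apply/bigmax_leqP_seq => beta /deg_e -> _.
  by rewrite ltnS leq_add // -ltnS.
rewrite raddf_sum big_ord_recr /= big1 ?add0r; last first.
  move=> e1 _; rewrite raddf_sum big1 // => e2 _.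
  apply: (pihomog_ne0 _ (hom _ _)).
  by have := ltn_ord e1; have := ltn_ord e2; lia.
rewrite raddf_sum big_ord_recr /= big1 ?add0r; last first.
  move=> e2 _; apply: (pihomog_ne0 _ (hom _ _)).
  by have := ltn_ord e2; lia.
by rewrite pihomog_dE.
Qed.
End TopPart.

Definition ell_symbol (R : pzRingType) m p (c : R) (Z X : 'I_m -> R) k : R :=
  (c * (Z k * X k)) ^+ p - Z k ^+ p * (c * \sum_(j < m) Z j * X j) ^+ p.

Lemma rmorph_ell_symbol (R S : pzRingType) (f : {rmorphism R -> S}) m p
    (c : R) (Z X : 'I_m -> R) (c' : S) (Z' X' : 'I_m -> S) k :
    f c = c' -> (forall j, f (Z j) = Z' j) -> (forall j, f (X j) = X' j) ->
  f (ell_symbol p c Z X k) = ell_symbol p c' Z' X' k.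
Proof.
move=> fc fZ fX; rewrite /ell_symbol rmorphB; congr (_ - _).
  by rewrite rmorphXn !rmorphM fc fZ fX.
rewrite rmorphM !rmorphXn rmorphM rmorph_sum fc fZ.
by congr (_ * (_ * _) ^+ p); apply: eq_bigr => j _; rewrite rmorphM fZ fX.
Qed.

Lemma ell_symbolE (R : comPzRingType) m p (c : R) (Z X : 'I_m -> R) k :
  ell_symbol p c Z X k
  = c ^+ p * ((Z k * X k) ^+ p - Z k ^+ p * (\sum_(j < m) Z j * X j) ^+ p).
Proof. by rewrite /ell_symbol !exprMn mulrBr [Z k ^+ p * (_ * _)]mulrCA. Qed.

Section WeylTopPart.
Variable m : nat.
Implicit Types (P Q T U : weyl m) (d : nat) (k : 'I_m).

Lemma top_part_dleft d i Q T : top_part d Q T -> top_part d.+1 (dleft i Q) ('X_i * T).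
Proof.
move=> topQ; have := top_partM (top_partX _ i) topQ; rewrite add1n => topXQ.
rewrite /dleft addrC; apply: top_partDl topXQ _.
by rewrite (leq_trans (msize_map_mpoly_le _ _)) //; case: topQ.
Qed.

Lemma top_part_dpow d beta Q T :
  top_part d Q T -> top_part (mdeg beta + d) (dpow beta Q) ('X_[beta] * T).
Proof.
have top_iter i n d' Q' T' : top_part d' Q' T' ->
    top_part (n + d') (iter n (dleft i) Q') ('X_i ^+ n * T').
  move=> topQ'; elim: n => [|n IHn]; first by rewrite expr0 mul1r.
  by rewrite iterS exprS -mulrA; apply: top_part_dleft.
move=> topQ; have top_fold (s : seq 'I_m) : top_part (\sum_(i <- s) beta i + d)
    (foldr (fun i Q' => iter (beta i) (dleft i) Q') Q s)
    ((\prod_(i <- s) 'X_i ^+ beta i) * T).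
  elim: s => [|i s IHs] /=; first by rewrite !big_nil mul1r.
  by rewrite !big_cons -addnA -mulrA; apply: top_iter.
by have := top_fold (enum 'I_m); rewrite mdegE mpolyXE_id !big_enum.
Qed.

Lemma top_part_wmul d1 d2 P Q T U : top_part d1 P T -> top_part d2 Q U ->
  top_part (d1 + d2) (wmul P Q) (T * U).
Proof.
case=> le_P <- topQ; rewrite /wmul /zleft.
have top_term beta : beta \in msupp P ->
    top_part (mdeg beta + d2) (dpow beta Q) ('X_[beta] * U) /\ (mdeg beta <= d1)%N.
  move=> /msize_mdeg_lt lt_beta; split; first exact: top_part_dpow.
  by rewrite -ltnS (leq_trans lt_beta).
split.
  rewrite big_seq; apply/(leq_trans (msize_sum _ _ _))/bigmax_leqP_seq.
  move=> beta _ /top_term[[le_D _] le_beta].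
  rewrite mul_mpolyC (leq_trans (msizeZ_le _ _)) // (leq_trans le_D) //.
  by rewrite ltnS leq_add2r.
rewrite raddf_sum /= pihomogE big_distrl /= [RHS]big_mkcond /=.
apply: eq_big_seq => beta /top_term[[le_D topD] le_beta].
rewrite mul_mpolyC linearZ /=; case: eqP => [deg_beta | /eqP ne_beta].
  by rewrite -deg_beta topD; exact: scalerAl.
rewrite pihomog_msize_le ?scaler0 // (leq_trans le_D) //.
by rewrite ltn_add2r ltn_neqAle ne_beta.
Qed.

Lemma top_part_wprod n d (G : 'I_n -> weyl m) T :
    (forall i, top_part d (G i) T) ->
  top_part (n * d) (\big[@wmul m/wone m]_(i < n) G i) (T ^+ n).
Proof.
elim: n G => [|n IHn] G topG.
  by rewrite big_ord0; apply: top_part_const; rewrite msize1.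
rewrite big_ord_recl mulSn exprS.
exact: top_part_wmul (topG _) (IHn _ (fun i => topG _)).
Qed.

Lemma msize_wc c : (msize (wc m c) <= 1)%N.
Proof. by rewrite msizeC; case: (_ != 0). Qed.

Lemma top_part_wz k : top_part 0 (wz k) (wz k).
Proof. by apply: top_part_const; rewrite msizeC; case: (_ != 0). Qed.

Lemma top_part_ell p (a : 'I_p -> CC) (b : 'I_p -> 'I_m -> CC) k :
  top_part p (ell a b k) (ell_symbol p (wc m p%:R^-1) (@wz m) (@wd m) k).
Proof.
pose c := wc m p%:R^-1.
have top_c : top_part 0 c c by apply/top_part_const/msize_wc.
have top_zd (j : 'I_m) : top_part 1 (wmul (wz j) (wd j)) (wz j * wd j).
  by have := top_part_wmul (top_part_wz j) (top_partX _ j); rewrite add0n.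
have top_gen : top_part 1 (wmul c (wmul (wz k) (wd k))) (c * (wz k * wd k)).
  by have := top_part_wmul top_c (top_zd k); rewrite add0n.
have top_euler : top_part 1 (wmul c (\sum_(j < m) wmul (wz j) (wd j)))
                            (c * \sum_(j < m) wz j * wd j).
  by rewrite -[1%N]/(0 + 1)%N; apply: top_part_wmul top_c _; apply: top_part_sum.
apply: top_partB.
  have := top_part_wprod (fun i => top_partDl top_gen (msize_wc (b i k - 1))).
  by rewrite muln1.
have := top_part_wmul (top_part_wprod (fun i : 'I_p => top_part_wz k))
          (top_part_wprod (fun i => top_partDl top_euler (msize_wc (a i)))).
by rewrite muln0 muln1.
Qed.

End WeylTopPart.

Lemma dpow0 m (Q : weyl m) : dpow 0%MM Q = Q.
Proof. by rewrite /dpow; elim: (enum 'I_m) => //= i s ->; rewrite mnm0E. Qed.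

Lemma wmul1l m (Q : weyl m) : wmul (wone m) Q = Q.
Proof. by rewrite /wmul /wone msupp1 big_seq1 /zleft mcoeff1 eqxx dpow0 mul1r. Qed.

Lemma wmul0l m (Q : weyl m) : wmul 0 Q = 0.
Proof. by rewrite /wmul msupp0 big_nil. Qed.

Lemma in_left_ideal_gen m n (g : 'I_n -> weyl m) k : in_left_ideal g (g k).
Proof.
exists (fun j => if j == k then wone m else 0).
rewrite (bigD1 k) //= eqxx wmul1l big1 ?addr0 // => j /negbTE ->.
exact: wmul0l.
Qed.

Section PrincipalSymbol.
Variables (m : nat) (z xi : 'I_m -> CC).

Lemma psymb_top_part d (P T : weyl m) :
  top_part d P T -> T != 0 -> psymb P z xi = mmap (meval z) xi T.
Proof.
move=> topP nzT; have msizeP := top_part_msize topP nzT; case: topP => _ <-.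
rewrite /psymb msizeP /= pihomogE raddf_sum /=; apply: eq_bigr => beta _.
by rewrite mmapZ mmapX.
Qed.

Lemma mmap_wc c : mmap (meval z) xi (wc m c) = c.
Proof. by rewrite mmapC; exact: mevalC. Qed.

Lemma mmap_wz j : mmap (meval z) xi (wz j) = z j.
Proof. by rewrite mmapC; exact: mevalXU. Qed.

Lemma mmap_wd j : mmap (meval z) xi (wd j) = xi j.
Proof. by rewrite mmapX mmap1U. Qed.

Lemma mmap_ell_symbol p c k :
  mmap (meval z) xi (ell_symbol p (wc m c) (@wz m) (@wd m) k)
  = c ^+ p * ((z k * xi k) ^+ p - z k ^+ p * (\sum_(j < m) z j * xi j) ^+ p).
Proof. by rewrite (rmorph_ell_symbol _ _ (mmap_wc c) mmap_wz mmap_wd) ell_symbolE. Qed.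

End PrincipalSymbol.

Lemma natrC_eq (n k : nat) : ((n%:R : CC) == k%:R) = (n == k).
Proof.
rewrite -(rmorph_nat (real_complex R)) -(rmorph_nat (real_complex R) k).
by rewrite fmorph_eq eqr_nat.
Qed.

Lemma ell_symbol_neq0 m p k : (0 < p)%N ->
  ell_symbol p (wc m p%:R^-1) (@wz m) (@wd m) k != 0.
Proof.
move=> p_gt0; apply/eqP => sym0.
pose z j : CC := if j == k then 2 else 0.
have := mmap_ell_symbol z (fun=> 1) p p%:R^-1 k; rewrite sym0 raddf0.
have -> : \sum_(j < m) z j * 1 = 2.
  by rewrite (bigD1 k) //= big1 => [|j /negbTE ne_jk]; rewrite /z ?eqxx ?ne_jk ?mulr1 ?addr0.
rewrite /z eqxx mulr1 => /esym/eqP; rewrite mulf_eq0 expf_eq0 invr_eq0.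
rewrite (natrC_eq p 0) (gtn_eqF p_gt0) andbF /= subr_eq0 -natrX -natrM natrC_eq.
by rewrite -expnD eqn_exp2l // -{1}[p]addn0 eqn_add2l eq_sym (gtn_eqF p_gt0).
Qed.

Lemma psymb_ell m p (a : 'I_p -> CC) (b : 'I_p -> 'I_m -> CC) k z xi : (0 < p)%N ->
  psymb (ell a b k) z xi
  = p%:R ^- p * ((z k * xi k) ^+ p - z k ^+ p * (\sum_(j < m) z j * xi j) ^+ p).
Proof.
move=> p_gt0; rewrite (psymb_top_part _ _ (top_part_ell a b k)) ?ell_symbol_neq0 //.
by rewrite mmap_ell_symbol exprVn.
Qed.

Lemma prim_root_exprS (F : fieldType) p (ze w : F) :
  p.-primitive_root ze -> w ^+ p = 1 -> {i : 'I_p | w = ze ^+ i.+1}.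
Proof.
move=> prim_ze wp; have p_gt0 := prim_order_gt0 prim_ze.
have [i ->] := prim_rootP prim_ze wp.
exists (Ordinal (ltn_pmod (i + p).-1 p_gt0)) => /=.
rewrite exprS (prim_expr_mod prim_ze) -exprS prednK ?addn_gt0 ?p_gt0 ?orbT //.
by rewrite exprD (prim_expr_order prim_ze) mulr1.
Qed.

Lemma prod_unity_sum_eq0 (F : fieldType) m p (ze : F) (y xi : 'I_m -> F) :
    p.-primitive_root ze -> (exists k, xi k != 0) ->
    (forall k, xi k ^+ p = (\sum_(j < m) y j * xi j) ^+ p) ->
  \prod_(t : {ffun 'I_m -> 'I_p}) (1 - \sum_(j < m) ze ^+ (t j).+1 * y j) = 0.
Proof.
move=> prim_ze [k0 xi_k0]; set s := \sum_(j < m) y j * xi j => xi_p.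
have p_gt0 := prim_order_gt0 prim_ze.
have s_neq0 : s != 0.
  apply: contra_neq xi_k0 => s0; move: (xi_p k0); rewrite s0 expr0n gtn_eqF //.
  by move/eqP; rewrite expf_eq0 p_gt0 => /eqP.
have ratio_p k : (xi k / s) ^+ p = 1 by rewrite exprMn exprVn xi_p divff // expf_neq0.
pose t := [ffun k => sval (prim_root_exprS prim_ze (ratio_p k))].
rewrite (bigD1 t) //=; apply/eqP; rewrite mulf_eq0 subr_eq0; apply/orP; left.
have -> : \sum_(j < m) ze ^+ (t j).+1 * y j = \sum_(j < m) xi j / s * y j.
  by apply: eq_bigr => j _; rewrite ffunE -(svalP (prim_root_exprS _ _)).
have -> : \sum_(j < m) xi j / s * y j = s / s.
  by rewrite mulr_suml; apply: eq_bigr => j _; rewrite mulrAC [xi j * _]mulrC.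
by rewrite divff.
Qed.

Section Zeta.
Local Open Scope R_scope.
Variable p : nat.
Hypothesis p_gt0 : (0 < p)%N.
Let th := 2 * PI / INR p.

Lemma INR_p_neq0 : INR p <> 0.
Proof. by apply: not_0_INR; lia. Qed.

Lemma zeta_expr j : (zeta p ^+ j)%R = Complex (cos (INR j * th)) (sin (INR j * th)).
Proof.
elim: j => [|j IHj].
  by rewrite expr0 Rmult_0_l cos_0 sin_0.
rewrite exprSr IHj /zeta -INRE -/th S_INR Rmult_plus_distr_r Rmult_1_l cos_plus sin_plus.
by congr Complex; rewrite Rplus_comm.
Qed.

Lemma sin_cos_neq_0_1 x : 0 < x < 2 * PI -> sin x = 0 -> cos x <> 1.
Proof.
move=> [x_gt0 x_lt2PI] sin0 cos1; have PI_gt0 := PI_RGT_0.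
case: (Rtotal_order x PI) => [x_ltPI | [x_PI | x_gtPI]].
- by have := sin_gt_0 _ x_gt0 x_ltPI; lra.
- by move: cos1; rewrite x_PI cos_PI; lra.
- by have := sin_lt_0 _ x_gtPI x_lt2PI; lra.
Qed.

Lemma zeta_prim_root : p.-primitive_root (zeta p).
Proof.
have th_p : INR p * th = 2 * PI by rewrite /th; field; exact: INR_p_neq0.
apply/andP; split => //; apply/forallP => i; rewrite unity_rootE zeta_expr.
have [ip | ip] := eqVneq i.+1 p.
  by rewrite ip th_p cos_2PI sin_2PI; apply/eqP/eqP.
have th_gt0 : 0 < th.
  by rewrite /th; apply: Rdiv_lt_0_compat; [have := PI_RGT_0; lra | apply: lt_0_INR; lia].
have i_gt0 : 0 < INR i.+1 by apply: lt_0_INR; lia.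
have i_ltp : INR i.+1 < INR p by apply: lt_INR; move: ip (ltn_ord i); lia.
have : 0 < INR i.+1 * th < 2 * PI by split; nra.
move: (INR i.+1 * th) => x x_bounds; rewrite eqbF_neg; apply/eqP => -[cos1 sin0].
exact: (sin_cos_neq_0_1 x_bounds sin0 cos1).
Qed.

End Zeta.

Theorem mainTheorem12 (m p : nat) (hp : (0 < p)%N)
    (a : 'I_p -> CC) (b : 'I_p -> 'I_m -> CC)
    (hb : forall (i : 'I_p) (k : 'I_m), nat_of_ord i = p.-1 -> b i k = 1)
    (x : 'I_m -> CC) :
  sing_locus (in_left_ideal (ell a b)) x ->
  (\prod_(k < m) x k) * Rpoly p x = 0.
Proof.
pose f : {mpoly CC[m]} := (\prod_(k < m) 'X_k) *
  \prod_(t : {ffun 'I_m -> 'I_p}) (1 - \sum_(j < m) (zeta p ^+ (t j).+1)%:MP * 'X_j).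
have f_eval y : f.@[y] = (\prod_(k < m) y k) * Rpoly p y.
  rewrite rmorphM /= !rmorph_prod /=; congr (_ * _).
    by apply: eq_bigr => k _; rewrite mevalXU.
  apply: eq_bigr => t _; rewrite rmorphB /= rmorph1 rmorph_sum /=; congr (_ - _).
  by apply: eq_bigr => j _; rewrite rmorphM /= mevalC mevalXU.
move=> sing_x; rewrite -f_eval; apply: sing_x => y [xi [xi_neq0 char_y]].
rewrite f_eval; have [k /eqP y_k | y_neq0] := pickP (fun k => y k == 0).
  by rewrite (bigD1 k) //= y_k !mul0r.
rewrite /Rpoly (prod_unity_sum_eq0 (zeta_prim_root hp) xi_neq0) ?mulr0 // => k.
have := char_y _ (in_left_ideal_gen (ell a b) k); rewrite psymb_ell // => /eqP.
rewrite mulf_eq0 invr_eq0 expf_eq0 (natrC_eq p 0) (gtn_eqF hp) andbF /=.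
rewrite subr_eq0 exprMn => /eqP; apply: mulfI.
by rewrite expf_neq0 ?y_neq0.
Qed.
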